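(* Let $0\le p_1<1/2<p_2\le 1$, $p_1'=\tfrac12(p_1+\tfrac12)$, $p_2'=\tfrac12(p_2+\tfrac12)$, and let $\ell$ be a positive integer such that $\log_2(2\ell)$ is an integer, $\ell(1/2-p_1)\ge 2\log_2(2\ell)+1$ and $\ell(p_2-1/2)\ge 2\log_2(2\ell)+1$. Let $\mathbf{x}=\mathbf{x}_1\mathbf{x}_2\in\mathcal{W}(2\ell,\ell,[p_1'\ell,p_2'\ell])$ with $\mathbf{x}_1,\mathbf{x}_2\in\{0,1\}^\ell$. Let $a=\mathrm{Syn}(\mathbf{x}_1)\bmod 2\ell$, let $\mathbf{p}$ be the binary representation of $a$ of length $\log_2(2\ell)$, and let $\mathbf{y}=\mathbf{x}_1(\mathbf{p}\,||\,\overline{\mathbf{p}})\mathbf{x}_2$. Then $\mathbf{y}\in\mathcal{W}(2\ell+2\log_2(2\ell),\ell,[p_1\ell,p_2\ell])$, i.e. every window of size $\ell$ of $\mathbf{y}$ has weight in $[p_1\ell,p_2\ell]$.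
   Context: $\mathrm{wt}(\mathbf{x})$ denotes the number of ones of a binary sequence; $\overline{\mathbf{p}}$ is the bitwise complement; juxtaposition denotes concatenation. For $\mathbf{y}=y_1\dots y_m$, $\mathbf{w}=w_1\dots w_m$, the interleaving is $\mathbf{y}\,||\,\mathbf{w}=y_1w_1\dots y_mw_m$. The VT syndrome of $\mathbf{x}=x_1\dots x_n$ is $\mathrm{Syn}(\mathbf{x})=\sum_{i=1}^n i\,x_i$. For reals $a\le b$ and $\ell\le n$, $\mathcal{W}(n,\ell,[a,b])$ is the set of $\mathbf{x}\in\{0,1\}^n$ all of whose windows $x_i\dots x_{i+\ell-1}$ ($1\le i\le n-\ell+1$) have weight in $[a,b]$. *)

From mathcomp Require Import all_boot all_order all_algebra.
Set Implicit Arguments. Unset Strict Implicit. Unset Printing Implicit Defensive.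
Import Order.TTheory GRing.Theory Num.Theory.

(* Binary sequences are [seq bool]; positions are 1-indexed in the paper,
   0-indexed here (window i below is the paper's window starting at i+1). *)

Definition wt (x : seq bool) : nat := count id x.

Definition bcompl (x : seq bool) : seq bool := map negb x.

Definition interleave (y w : seq bool) : seq bool :=
  flatten [seq [:: yw.1; yw.2] | yw <- zip y w].

Definition Syn (x : seq bool) : nat :=
  \sum_(i < size x) (i.+1 * nth false x i)%N.

(* binary representation of a with exactly m bits, most significant bit first *)
Definition binrep (m a : nat) : seq bool :=
  [seq odd (a %/ 2 ^ (m - 1 - i)) | i <- iota 0 m].

Definition window (x : seq bool) (i l : nat) : seq bool := take l (drop i x).

Definition inW {R : realFieldType} (n l : nat) (a b : R) (x : seq bool) : Prop :=
  size x = n /\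
  forall i : nat, (i + l <= n)%N ->
    ((a <= (wt (window x i l))%:R) && ((wt (window x i l))%:R <= b))%R.

(* Write u := p || ~p for the inserted block, of length 2m.
   Every prefix of u of length d has weight within 1/2 of d/2, because u is
   a concatenation of the pairs (b, ~b); we call such a word prefix-balanced.
   A window of length l of y = x1 u x2 consists of a tail of x1, a factor
   u[c, d) of u and a head of x2.  Sliding the x1-part of that window back by
   d - c positions yields a window of length l of x = x1 x2 that differs from
   the y-window only in that u[c, d) is replaced by a factor of x1 of the same
   length.  Since u[c, d) is balanced up to 1 and both blocks have length at
   most 2m, the two weights differ by at most m + 1/2 (lemma
   [balanced_window_approx]).  The weights of windows of x lie in
   [p1' l, p2' l], and the hypotheses l (1/2 - p1) >= 2m + 1 and
   l (p2 - 1/2) >= 2m + 1 absorb the error, giving [p1 l, p2 l] for y.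
   Weights of factors are handled through [seg_wt s a b], the number of ones
   of s in positions [a, b). Note that the argument uses nothing about the
   parity word p except its length. *)
From mathcomp Require Import all_boot all_order all_algebra zify lra.
Import Order.TTheory GRing.Theory Num.Theory.

Definition seg_wt (s : seq bool) (a b : nat) : nat :=
  \sum_(a <= k < b) nth false s k.

Lemma wt_seg_wt s : wt s = seg_wt s 0 (size s).
Proof.
rewrite /wt /seg_wt; elim: s => [|x s IH]; first by rewrite big_geq.
by rewrite /= big_nat_recl // IH.
Qed.

Lemma wt_window s i l :
  (i + l <= size s)%N -> wt (window s i l) = seg_wt s i (i + l).
Proof.
move=> hil; rewrite wt_seg_wt /window size_take size_drop.
have -> : (if l < size s - i then l else size s - i) = l by case: ifP; lia.
rewrite /seg_wt -{2}(add0n i) big_addn addKn; apply: eq_big_nat => k hk.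
by rewrite nth_take ?nth_drop 1?addnC //; lia.
Qed.

Lemma seg_wt_split s a b c :
  (a <= b <= c)%N -> seg_wt s a c = seg_wt s a b + seg_wt s b c.
Proof. by move=> /andP[hab hbc]; rewrite /seg_wt (@big_cat_nat _ _ _ b). Qed.

Lemma seg_wt_empty s a b : (b <= a)%N -> seg_wt s a b = 0.
Proof. by move=> hba; rewrite /seg_wt big_geq. Qed.

Lemma seg_wt_le s a b : (seg_wt s a b <= b - a)%N.
Proof.
rewrite /seg_wt -[X in (_ <= X)%N]muln1 -sum_nat_const_nat.
by apply: leq_sum => k _; case: nth.
Qed.

Lemma seg_wt_cons x s n : seg_wt (x :: s) 0 n.+1 = (x + seg_wt s 0 n)%N.
Proof. by rewrite /seg_wt big_nat_recl. Qed.

Lemma seg_wt_shift s s' a b k :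
  (forall j, (a <= j < b)%N -> nth false s (j + k) = nth false s' j) ->
  seg_wt s (a + k) (b + k) = seg_wt s' a b.
Proof.
move=> eq_s; rewrite /seg_wt big_addn addnK.
by apply: eq_big_nat => j hj; rewrite eq_s.
Qed.

Definition prefix_balanced (u : seq bool) : Prop :=
  forall d, (d <= size u)%N ->
    (d <= 2 * seg_wt u 0 d + 1)%N /\ (2 * seg_wt u 0 d <= d + 1)%N.

Lemma interleave_compl_cons x p :
  interleave (x :: p) (bcompl (x :: p)) = x :: ~~ x :: interleave p (bcompl p).
Proof. by []. Qed.

Lemma size_interleave_compl p :
  size (interleave p (bcompl p)) = (2 * size p)%N.
Proof. by elim: p => [|x p IH] //; rewrite interleave_compl_cons /= IH; lia. Qed.

Lemma interleave_compl_balanced p : prefix_balanced (interleave p (bcompl p)).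
Proof.
rewrite /prefix_balanced size_interleave_compl.
elim: p => [|x p IH] d /=.
  by move=> hd; rewrite (_ : d = 0) ?seg_wt_empty //; lia.
rewrite interleave_compl_cons.
case: d => [|[|d]] hd; first by rewrite seg_wt_empty.
  by rewrite seg_wt_cons seg_wt_empty //; case: x.
rewrite !seg_wt_cons; have [] := IH d ltac:(lia); case: x => /=; lia.
Qed.

Set Implicit Arguments.
Unset Strict Implicit.

Section WindowDecomposition.

Variables (x1 u x2 : seq bool) (l k : nat).
Hypotheses (size_x1 : size x1 = l) (size_u : size u = (2 * k)%N) (size_x2 : size x2 = l).

Lemma window_decomposition i : (i + l <= 2 * l + 2 * k)%N ->
  seg_wt (x1 ++ u ++ x2) i (i + l) =
  (seg_wt (x1 ++ x2) (minn i l) l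
   + seg_wt u (maxn i l - l) (minn (i + l) (l + 2 * k) - l)
   + seg_wt (x1 ++ x2) l (maxn (i + l) (l + 2 * k) - 2 * k))%N.
Proof.
move=> hi.
rewrite (seg_wt_split _ i (maxn i l) (i + l)); last by apply/andP; split; lia.
rewrite (seg_wt_split _ (maxn i l) (minn (i + l) (l + 2 * k)) (i + l));
  last by apply/andP; split; lia.
rewrite addnA; congr (_ + _ + _)%N.
- case: (leqP i l) => hil; last by rewrite !seg_wt_empty.
  apply: eq_big_nat => j hj; have hjl : (j < l)%N by lia.
  by rewrite !nth_cat size_x1 hjl.
- rewrite -[in LHS](subnK (_ : l <= maxn i l)%N); last by lia.
  rewrite -[in X in seg_wt _ _ X](subnK (_ : l <= minn (i + l) (l + 2 * k))%N);
    last by lia.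
  apply: seg_wt_shift => j hj; rewrite nth_cat size_x1 ifN; last by lia.
  by rewrite addnK nth_cat size_u ifT //; lia.
- case: (leqP (l + 2 * k) (i + l)) => hil; last by rewrite !seg_wt_empty //; lia.
  rewrite [in LHS](_ : i + l = (i + l - 2 * k) + 2 * k)%N; last by lia.
  apply: seg_wt_shift => j hj.
  have hjn : (j + 2 * k < l)%N = false by lia.
  have hjl : (j < l)%N = false by lia.
  have hju : (j + 2 * k - l < 2 * k)%N = false by lia.
  rewrite !nth_cat size_x1 hjn hjl size_u hju; congr nth; lia.
Qed.

(* Evenness matters: a whole balanced block of odd length
   may carry one more one than half its length. *)
Lemma balanced_window_approx i :
  prefix_balanced u -> (i + l <= 2 * l + 2 * k)%N ->
  exists2 j, (j + l <= 2 * l)%N &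
    (2 * seg_wt (x1 ++ x2) j (j + l) <= 2 * seg_wt (x1 ++ u ++ x2) i (i + l) + 2 * k + 1)%N /\
    (2 * seg_wt (x1 ++ u ++ x2) i (i + l) <= 2 * seg_wt (x1 ++ x2) j (j + l) + 2 * k)%N.
Proof.
move=> bal_u hi; rewrite window_decomposition //.
set q := minn i l; set c := (maxn i l - l)%N.
set d := (minn (i + l) (l + 2 * k) - l)%N; set b := (maxn (i + l) (l + 2 * k) - 2 * k)%N.
have hb : (l <= b <= 2 * l)%N by apply/andP; split; lia.
have hlen : ((l - q) + (d - c) + (b - l) = l)%N by lia.
have hcd : (c <= d <= 2 * k)%N by apply/andP; split; lia.
have hq : (q <= l)%N by lia.
clearbody q c d b.
(* The x1 x2 window ends where the y-window does, at position b. *)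
exists (b - l)%N; first by lia.
rewrite (_ : b - l + l = b)%N; last by lia.
rewrite (seg_wt_split _ (b - l) q b); last by apply/andP; split; lia.
rewrite (seg_wt_split _ q l b); last by apply/andP; split; lia.
have hE := seg_wt_le (x1 ++ x2) (b - l) q.
have hS : seg_wt u 0 d = (seg_wt u 0 c + seg_wt u c d)%N.
  by apply: seg_wt_split; apply/andP; split; lia.
have [hd1 hd2] := bal_u d ltac:(lia); have [hc1 hc2] := bal_u c ltac:(lia).
split; lia.
Qed.

End WindowDecomposition.

Local Open Scope ring_scope.

Theorem corollary3 (R : realFieldType) (p1 p2 : R) (l m : nat)
    (x1 x2 : seq bool) :
  0 <= p1 -> p1 < 1 / 2 -> 1 / 2 < p2 -> p2 <= 1 ->
  (0 < l)%N ->
  (2 * l = 2 ^ m)%N ->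
  (2 * m + 1)%:R <= l%:R * (1 / 2 - p1) ->
  (2 * m + 1)%:R <= l%:R * (p2 - 1 / 2) ->
  size x1 = l -> size x2 = l ->
  inW (2 * l) l ((p1 + 1 / 2) / 2 * l%:R) ((p2 + 1 / 2) / 2 * l%:R) (x1 ++ x2) ->
  let a := (Syn x1 %% (2 * l))%N in
  let p := binrep m a in
  let y := x1 ++ interleave p (bcompl p) ++ x2 in
  inW (2 * l + 2 * m) l (p1 * l%:R) (p2 * l%:R) y.
Proof.
move=> hp1 hp1' hp2 hp2' _ _ gap1 gap2 size_x1 size_x2 [size_x inW_x] a p y.
have size_p : size p = m by rewrite /p /binrep size_map size_iota.
set u := interleave p (bcompl p) in y *.
have size_u : size u = (2 * m)%N by rewrite size_interleave_compl size_p.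
have size_y : size y = (2 * l + 2 * m)%N by rewrite /y !size_cat size_u size_x1 size_x2; lia.
split=> // i hi.
have [j hj [approx1 approx2]] := balanced_window_approx size_x1 size_u size_x2
  (interleave_compl_balanced p) hi.
have := inW_x j hj; rewrite !wt_window ?size_x ?size_y //.
move: approx1 approx2; set T := seg_wt y i (i + l); set W := seg_wt _ j (j + l).
rewrite -!(ler_nat R) !natrD => approx1 approx2 /andP[W_lo W_hi].
move: gap1 gap2; rewrite !natrD => gap1 gap2.
(* |T - W| <= m + 1/2 and the gaps of p1', p2' to p1, p2 are >= m + 1/2. *)
apply/andP; split; nra.
Qed.
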